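(* Let $t,t'\in B_n$ with $t\neq t'$, let $G$ be a digraph such that $\mathbb{A}(G)$ satisfies $t\approx t'$, and let $L=L_{t,t'}$. If $v_0\to v_1\to\dots\to v_{L+1}$ is a walk and $(v_L,v'_{L+1})$ is an edge in $G$ such that $v_{L+1}$ and $v'_{L+1}$ belong to nontrivial strongly connected components $K$ and $K'$ respectively, then $K=K'$. Consequently, $B_G<L_{t,t'}$.
   Context: Digraphs $G=(V,E)$ have $E\subseteq V\times V$, loops allowed, possibly infinite. $\mathbb{A}(G)$ is the groupoid on $V\cup\{\infty\}$ with $xy=x$ if $x,y\in V$, $(x,y)\in E$, and $xy=\infty$ otherwise. $B_n$: binary terms with $x_1,\dots,x_n$ each occurring once in this order; $G(t)$: rooted tree defined by $G(x_i)$ a single vertex and $G(t_1t_2)=G(t_1)\cup G(t_2)$ plus an edge from the leftmost variable of $t_1$ to that of $t_2$; root $x_1$. With $T=G(t)$, $T'=G(t')$ and depth $d_T$: $L_{t,t'}$ is the largest integer $m$ such that for all $x$, if $d_T(x)\le m$ or $d_{T'}(x)\le m$ then $d_T(x)=d_{T'}(x)$. A strongly connected component is trivial if it is a single vertex without a loop, nontrivial otherwise. $B_G$ is the largest integer $m$ such that there exist a walk $v_0\to\dots\to v_m$ and edges $(v_m,v_{m+1}),(v_m,v'_{m+1})$ with $v_{m+1},v'_{m+1}$ in distinct nontrivial strongly connected components ($\infty$ if unbounded, $-\infty$ if none). *)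

From Stdlib Require Import List Arith ClassicalEpsilon.
Import ListNotations.
Set Implicit Arguments.

(* Variable x_i is [Var i]; B_n uses x_1,...,x_n. *)
Inductive term : Type :=
| Var : nat -> term
| App : term -> term -> term.

Fixpoint leaves (t : term) : list nat :=
  match t with
  | Var i => [i]
  | App a b => leaves a ++ leaves b
  end.

Definition in_Bn (n : nat) (t : term) : Prop := leaves t = seq 1 n.

Fixpoint leftmost (t : term) : nat :=
  match t with
  | Var i => i
  | App a _ => leftmost a
  end.

Fixpoint tedges (t : term) : list (nat * nat) :=
  match t with
  | Var _ => []
  | App a b => (leftmost a, leftmost b) :: tedges a ++ tedges b
  end.

Inductive twalk (t : term) : nat -> nat -> nat -> Prop :=
| twalk_nil x : twalk t x x 0
| twalk_cons x y z k : In (x, y) (tedges t) -> twalk t y z k -> twalk t x z (S k).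

Definition is_depth (t : term) (x d : nat) : Prop :=
  twalk t (leftmost t) x d /\ forall d', twalk t (leftmost t) x d' -> d <= d'.

Definition L_cond (t t' : term) (m : nat) : Prop :=
  forall x dT dT', is_depth t x dT -> is_depth t' x dT' ->
    (dT <= m \/ dT' <= m) -> dT = dT'.

(* L is L_{t,t'}: the largest integer satisfying L_cond.  (Negative integers
   satisfy it vacuously and 0 always does, so L is a natural number.) *)
Definition is_L (t t' : term) (L : nat) : Prop :=
  L_cond t t' L /\ forall m, L_cond t t' m -> m <= L.

(* A digraph is a vertex type V with edge relation E (loops allowed, possibly infinite).
   The carrier of A(G) is option V, with None playing the role of ∞. *)
Definition Aop (V : Type) (E : V -> V -> Prop) (a b : option V) : option V :=
  match a, b with
  | Some x, Some y =>
      if excluded_middle_informative (E x y) then Some x else None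
  | _, _ => None
  end.

Fixpoint eval (V : Type) (E : V -> V -> Prop) (s : nat -> option V) (t : term)
  : option V :=
  match t with
  | Var i => s i
  | App a b => Aop E (eval E s a) (eval E s b)
  end.

Definition satisfies (V : Type) (E : V -> V -> Prop) (t t' : term) : Prop :=
  forall s : nat -> option V, eval E s t = eval E s t'.

Inductive reach (V : Type) (E : V -> V -> Prop) : V -> V -> Prop :=
| reach_refl x : reach E x x
| reach_step x y z : E x y -> reach E y z -> reach E x z.

Definition scc (V : Type) (E : V -> V -> Prop) (v : V) : V -> Prop :=
  fun w => reach E v w /\ reach E w v.

Definition nontrivial_scc (V : Type) (E : V -> V -> Prop) (v : V) : Prop :=
  (exists w, w <> v /\ scc E v w) \/ E v v.

(* m belongs to the set whose supremum is B_G: there is a walk v_0 -> ... -> v_m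
   and edges (v_m, a), (v_m, b) with a, b in distinct nontrivial SCCs. *)
Definition BG_witness (V : Type) (E : V -> V -> Prop) (m : nat) : Prop :=
  exists (v : nat -> V) (a b : V),
    (forall i, i < m -> E (v i) (v (S i))) /\
    E (v m) a /\ E (v m) b /\
    nontrivial_scc E a /\ nontrivial_scc E b /\ scc E a <> scc E b.

(* B_G < L  (B_G in Z ∪ {±∞}): every admissible m is < L. *)
Definition BG_lt (V : Type) (E : V -> V -> Prop) (L : nat) : Prop :=
  forall m, BG_witness E m -> m < L.

From Stdlib Require Import List Arith Lia Sorted Classical ClassicalEpsilon
  FunctionalExtensionality PropExtensionality.
Import ListNotations.

(* Write d and d' for the depths in G(t) and G(t').  By maximality of L, d and d'
   agree up to depth L, and some vertex x has, say, d(x) = L+1 < d'(x).  Let v_L have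
   successors a and b in nontrivial components, both of which carry infinite walks.
   Send each vertex u of G(t) to the (d u)-th vertex of the walk v_0 ... v_L a ... if u
   lies in the subtree of x, and of the walk v_0 ... v_L b ... otherwise: this is a
   homomorphism G(t) -> G, so t evaluates to v_0 and t' does not evaluate to ∞.  But the path
   of G(t') from the root to x enters the subtree of x by an edge p -> c with d(p) > L,
   and its image is an edge from the b-walk to the a-walk, so b reaches a.  By symmetry
   a and b lie in the same component.  A witness of B_G >= L truncated to its last L
   steps contradicts this. *)

Definition leaves_sorted (t : term) : Prop := StronglySorted lt (leaves t).

(* Meaningful only for leaves [x] of [t]. *)
Fixpoint depth (t : term) (x : nat) : nat :=
  match t with
  | Var _ => 0
  | App a b => if in_dec Nat.eq_dec x (leaves a) then depth a x else S (depth b x)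
  end.

Definition descendant (t : term) (x y : nat) : Prop := exists k, twalk t x y k.

Lemma StronglySorted_app_inv (A : Type) (R : A -> A -> Prop) (l1 l2 : list A) :
  StronglySorted R (l1 ++ l2) ->
  StronglySorted R l1 /\ StronglySorted R l2 /\
  (forall x y, In x l1 -> In y l2 -> R x y).
Proof.
  induction l1 as [|a l1 IH]; simpl; intros H.
  - split; [constructor | split; [exact H | intros x y []]].
  - apply StronglySorted_inv in H as [H1 H2].
    destruct (IH H1) as [S1 [S2 S12]].
    apply Forall_app in H2 as [F1 F2].
    split; [constructor; assumption | split; [assumption |]].
    intros x y [<- | Hx] Hy; [rewrite Forall_forall in F2 |]; auto.
Qed.

Lemma StronglySorted_seq (s k : nat) : StronglySorted lt (seq s k).
Proof.
  revert s; induction k as [|k IH]; intros s; simpl; constructor; auto.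
  apply Forall_forall; intros x Hx; apply in_seq in Hx; lia.
Qed.

Lemma leaves_sorted_App (a b : term) :
  leaves_sorted (App a b) ->
  leaves_sorted a /\ leaves_sorted b /\
  (forall x y, In x (leaves a) -> In y (leaves b) -> x < y).
Proof. apply StronglySorted_app_inv. Qed.

Lemma leaves_leftmost (t : term) : exists r, leaves t = leftmost t :: r.
Proof.
  induction t as [i | a [r Hr] b _]; simpl; [eexists; reflexivity |].
  rewrite Hr; eexists; reflexivity.
Qed.

Lemma leftmost_in_leaves (t : term) : In (leftmost t) (leaves t).
Proof. destruct (leaves_leftmost t) as [r ->]; left; reflexivity. Qed.

Lemma tedges_in_leaves (t : term) (i j : nat) :
  In (i, j) (tedges t) -> In i (leaves t) /\ In j (leaves t).
Proof.
  induction t as [k | a IHa b IHb]; simpl; [intros [] |].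
  intros [H | H].
  - injection H as <- <-.
    split; apply in_or_app; [left | right]; apply leftmost_in_leaves.
  - apply in_app_or in H as [H | H]; [destruct (IHa H) | destruct (IHb H)];
      split; apply in_or_app; auto.
Qed.

Lemma leftmost_le (t : term) (x : nat) :
  leaves_sorted t -> In x (leaves t) -> leftmost t <= x.
Proof.
  induction t as [i | a IHa b IHb]; simpl; intros Hs Hx.
  - destruct Hx as [-> | []]; lia.
  - destruct (leaves_sorted_App _ _ Hs) as [Ha [Hb Hab]].
    apply in_app_or in Hx as [Hx | Hx]; auto.
    specialize (Hab _ _ (leftmost_in_leaves a) Hx); lia.
Qed.

Lemma tedges_lt (t : term) (i j : nat) :
  leaves_sorted t -> In (i, j) (tedges t) -> i < j.
Proof.
  induction t as [k | a IHa b IHb]; simpl; [intros _ [] |].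
  intros Hs H; destruct (leaves_sorted_App _ _ Hs) as [Ha [Hb Hab]].
  destruct H as [H | H].
  - injection H as <- <-; apply Hab; apply leftmost_in_leaves.
  - apply in_app_or in H as [H | H]; auto.
Qed.

Lemma tedges_parent_unique (t : term) (i i' j : nat) :
  leaves_sorted t -> In (i, j) (tedges t) -> In (i', j) (tedges t) -> i = i'.
Proof.
  induction t as [k | a IHa b IHb]; simpl; [intros _ [] |].
  intros Hs H H'; destruct (leaves_sorted_App _ _ Hs) as [Ha [Hb Hab]].
  assert (Hroot : forall k, ~ In (k, leftmost b) (tedges a ++ tedges b)).
  { intros k Hk; apply in_app_or in Hk as [Hk | Hk].
    - pose proof (Hab _ _ (proj2 (tedges_in_leaves _ _ _ Hk)) (leftmost_in_leaves b)); lia.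
    - pose proof (tedges_lt _ _ _ Hb Hk).
      pose proof (leftmost_le b k Hb (proj1 (tedges_in_leaves _ _ _ Hk))); lia. }
  destruct H as [H | H]; destruct H' as [H' | H'].
  - congruence.
  - injection H as <- <-; contradiction (Hroot _ H').
  - injection H' as <- <-; contradiction (Hroot _ H).
  - apply in_app_or in H as [H | H]; apply in_app_or in H' as [H' | H']; auto.
    + pose proof (Hab j j (proj2 (tedges_in_leaves _ _ _ H)) (proj2 (tedges_in_leaves _ _ _ H'))).
      lia.
    + pose proof (Hab j j (proj2 (tedges_in_leaves _ _ _ H')) (proj2 (tedges_in_leaves _ _ _ H))).
      lia.
Qed.

Lemma depth_leftmost (t : term) : depth t (leftmost t) = 0.
Proof.
  induction t as [i | a IHa b _]; simpl; auto.
  destruct (in_dec Nat.eq_dec (leftmost a) (leaves a)) as [_ | H]; auto.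
  contradiction (H (leftmost_in_leaves a)).
Qed.

Lemma depth_tedge (t : term) (i j : nat) :
  leaves_sorted t -> In (i, j) (tedges t) -> depth t j = S (depth t i).
Proof.
  induction t as [k | a IHa b IHb]; simpl; [intros _ [] |].
  intros Hs H; destruct (leaves_sorted_App _ _ Hs) as [Ha [Hb Hab]].
  destruct H as [H | H].
  - injection H as <- <-.
    destruct (in_dec Nat.eq_dec (leftmost b) (leaves a)) as [Hin | _].
    { specialize (Hab _ _ Hin (leftmost_in_leaves b)); lia. }
    destruct (in_dec Nat.eq_dec (leftmost a) (leaves a)) as [_ | Hnin].
    + rewrite !depth_leftmost; reflexivity.
    + contradiction (Hnin (leftmost_in_leaves a)).
  - apply in_app_or in H as [H | H]; destruct (tedges_in_leaves _ _ _ H) as [Hi' Hj'].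
    + destruct (in_dec Nat.eq_dec j (leaves a)); [| contradiction].
      destruct (in_dec Nat.eq_dec i (leaves a)); [auto | contradiction].
    + destruct (in_dec Nat.eq_dec j (leaves a)) as [Hja | _].
      { specialize (Hab _ _ Hja Hj'); lia. }
      destruct (in_dec Nat.eq_dec i (leaves a)) as [Hia | _].
      { specialize (Hab _ _ Hia Hi'); lia. }
      rewrite (IHb Hb H); reflexivity.
Qed.

Lemma twalk_depth (t : term) (y z k : nat) :
  leaves_sorted t -> twalk t y z k -> depth t z = depth t y + k.
Proof.
  intros Hs H; induction H as [x | x y z k Hxy _ IH]; [lia |].
  rewrite IH, (depth_tedge _ _ _ Hs Hxy); lia.
Qed.

Lemma twalk_le (t : term) (y z k : nat) : leaves_sorted t -> twalk t y z k -> y <= z.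
Proof.
  intros Hs H; induction H as [x | x y z k Hxy _ IH]; [lia |].
  pose proof (tedges_lt _ _ _ Hs Hxy); lia.
Qed.

Lemma twalk_lt (t : term) (y z k : nat) :
  leaves_sorted t -> 0 < k -> twalk t y z k -> y < z.
Proof.
  intros Hs Hk H; destruct H as [x | x y z k Hxy Hyz]; [lia |].
  pose proof (tedges_lt _ _ _ Hs Hxy); pose proof (twalk_le _ _ _ _ Hs Hyz); lia.
Qed.

Lemma twalk_snoc (t : term) (x y z k : nat) :
  twalk t x y k -> In (y, z) (tedges t) -> twalk t x z (S k).
Proof.
  intros H; induction H; intros; econstructor; eauto; constructor.
Qed.

Lemma twalk_unsnoc (t : term) (k : nat) : forall x z, twalk t x z (S k) ->
  exists y, twalk t x y k /\ In (y, z) (tedges t).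
Proof.
  induction k as [|k IH]; intros x z H; inversion H as [| ? y ? ? Hxy Hyz]; subst.
  - inversion Hyz; subst; exists x; split; [constructor | assumption].
  - destruct (IH _ _ Hyz) as [y' [W Hy'z]].
    exists y'; split; [econstructor; eauto | auto].
Qed.

Lemma twalk_add_inv (t : term) (k1 : nat) : forall k2 x z, twalk t x z (k1 + k2) ->
  exists y, twalk t x y k1 /\ twalk t y z k2.
Proof.
  induction k1 as [|k1 IH]; simpl; intros k2 x z H.
  - exists x; split; [constructor | assumption].
  - inversion H as [| ? y ? ? Hxy Hyz]; subst.
    destruct (IH _ _ _ Hyz) as [y' [W1 W2]].
    exists y'; split; [econstructor; eauto | auto].
Qed.

Lemma twalk_incl (a t : term) (y z k : nat) :
  incl (tedges a) (tedges t) -> twalk a y z k -> twalk t y z k.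
Proof. intros Hincl H; induction H; econstructor; eauto. Qed.

Lemma twalk_leaves (t : term) (y z k : nat) :
  twalk t y z k -> In y (leaves t) -> In z (leaves t).
Proof.
  intros H; induction H as [| x y z k Hxy _ IH]; auto.
  intros _; apply IH, (tedges_in_leaves _ _ _ Hxy).
Qed.

Lemma twalk_root_depth (t : term) (x : nat) :
  In x (leaves t) -> twalk t (leftmost t) x (depth t x).
Proof.
  induction t as [i | a IHa b IHb]; simpl; intros Hx.
  - destruct Hx as [-> | []]; constructor.
  - destruct (in_dec Nat.eq_dec x (leaves a)) as [Hxa | Hxa].
    + apply (twalk_incl a); [intros e He; right; apply in_or_app; auto | auto].
    + apply in_app_or in Hx as [Hx | Hx]; [contradiction |].
      econstructor; [left; reflexivity |].
      apply (twalk_incl b); [intros e He; right; apply in_or_app; auto | auto].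
Qed.

Lemma is_depth_iff (t : term) (x d : nat) :
  leaves_sorted t -> is_depth t x d <-> In x (leaves t) /\ d = depth t x.
Proof.
  intros Hs; split.
  - intros [W _]; split.
    + exact (twalk_leaves _ _ _ _ W (leftmost_in_leaves t)).
    + rewrite (twalk_depth _ _ _ _ Hs W), depth_leftmost; reflexivity.
  - intros [Hx ->]; split; [apply twalk_root_depth; auto |].
    intros d' W; rewrite (twalk_depth _ _ _ _ Hs W), depth_leftmost; lia.
Qed.

Lemma twalk_cross (P : nat -> Prop) (t : term) (y z k : nat) :
  twalk t y z k -> ~ P y -> P z ->
  exists p c k', twalk t y p k' /\ In (p, c) (tedges t) /\ ~ P p /\ P c.
Proof.
  intros H; induction H as [| x y z k Hxy _ IH]; intros Hx Hz; [contradiction |].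
  destruct (classic (P y)) as [Hy | Hy].
  - exists x, y, 0; repeat split; auto; constructor.
  - destruct (IH Hy Hz) as [p [c [k' [W [Hpc [Hp Hc]]]]]].
    exists p, c, (S k'); repeat split; auto; econstructor; eauto.
Qed.

Lemma tedge_into_descendants (t : term) (x i j : nat) :
  leaves_sorted t -> In (i, j) (tedges t) ->
  ~ descendant t x i -> descendant t x j -> j = x.
Proof.
  intros Hs Hij Hi [[|k] Hk].
  - inversion Hk; reflexivity.
  - destruct (twalk_unsnoc _ _ _ _ Hk) as [i' [Wi' Hi'j]].
    rewrite (tedges_parent_unique _ _ _ _ Hs Hi'j Hij) in Wi'.
    contradiction Hi; exists k; exact Wi'.
Qed.

Lemma eval_None_or_leftmost {V : Type} (E : V -> V -> Prop) (s : nat -> option V) (t : term) :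
  eval E s t = None \/ eval E s t = s (leftmost t).
Proof.
  induction t as [i | a IHa b IHb]; simpl; auto.
  destruct IHa as [-> | ->]; [left; reflexivity |].
  destruct (s (leftmost a)) as [x |]; [| left; reflexivity].
  destruct IHb as [-> | ->]; [left; reflexivity |].
  destruct (s (leftmost b)) as [y |]; [simpl | left; reflexivity].
  destruct (excluded_middle_informative (E x y)); auto.
Qed.

Lemma Aop_not_None {V : Type} (E : V -> V -> Prop) (p q : option V) :
  Aop E p q <> None -> exists a b, p = Some a /\ q = Some b /\ E a b.
Proof.
  destruct p as [a |], q as [b |]; simpl; try (intros H; contradiction H; reflexivity).
  destruct (excluded_middle_informative (E a b)); [eauto | intros H; contradiction H; reflexivity].
Qed.

Lemma eval_hom {V : Type} (E : V -> V -> Prop) (f : nat -> V) (t : term) :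
  (forall i j, In (i, j) (tedges t) -> E (f i) (f j)) ->
  eval E (fun u => Some (f u)) t = Some (f (leftmost t)).
Proof.
  induction t as [i | a IHa b IHb]; simpl; intros Hf; [reflexivity |].
  rewrite IHa, IHb by (intros; apply Hf; right; apply in_or_app; auto); simpl.
  destruct (excluded_middle_informative _) as [_ | Hab]; [reflexivity |].
  contradiction Hab; apply Hf; left; reflexivity.
Qed.

Lemma eval_tedge {V : Type} (E : V -> V -> Prop) (f : nat -> V) (t : term) (i j : nat) :
  eval E (fun u => Some (f u)) t <> None -> In (i, j) (tedges t) -> E (f i) (f j).
Proof.
  induction t as [k | a IHa b IHb]; simpl; [intros _ [] |].
  intros Hev Hij.
  destruct (Aop_not_None _ _ _ Hev) as [xa [xb [Ha [Hb Hab]]]].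
  destruct Hij as [Hij | Hij].
  - injection Hij as <- <-.
    destruct (eval_None_or_leftmost E (fun u => Some (f u)) a); [congruence |].
    destruct (eval_None_or_leftmost E (fun u => Some (f u)) b); congruence.
  - apply in_app_or in Hij as [Hij | Hij]; [apply IHa | apply IHb]; congruence.
Qed.

Lemma reach_trans {V : Type} (E : V -> V -> Prop) (x y z : V) :
  reach E x y -> reach E y z -> reach E x z.
Proof. intros H; induction H; eauto using reach_step. Qed.

Lemma reach_edge {V : Type} (E : V -> V -> Prop) (x y : V) : E x y -> reach E x y.
Proof. intros; eauto using reach_step, reach_refl. Qed.

Lemma walk_reach {V : Type} (E : V -> V -> Prop) (w : nat -> V) :
  (forall k, E (w k) (w (S k))) -> forall k, reach E (w 0) (w k).
Proof.
  intros Hw k; induction k as [|k IH]; [constructor |].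
  eapply reach_trans; [exact IH | apply reach_edge, Hw].
Qed.

Lemma scc_eq {V : Type} (E : V -> V -> Prop) (a b : V) :
  reach E a b -> reach E b a -> scc E a = scc E b.
Proof.
  intros Hab Hba; apply functional_extensionality; intros w.
  apply propositional_extensionality; unfold scc.
  split; intros [H1 H2]; split; eapply reach_trans; eauto.
Qed.

Lemma scc_successor {V : Type} (E : V -> V -> Prop) (u c : V) :
  nontrivial_scc E u -> scc E u c -> exists y, E c y /\ scc E u y.
Proof.
  intros Hu [Huc Hcu].
  destruct (classic (c = u)) as [-> | Hc].
  - destruct Hu as [[w [Hw [Huw Hwu]]] | Hloop].
    + destruct Huw as [| u y w Huy Hyw]; [contradiction Hw; reflexivity |].
      exists y; split; [| split; [apply reach_edge | eapply reach_trans]]; eauto.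
    + exists u; split; [| split]; auto using reach_refl.
  - destruct Hcu as [| c y u Hcy Hyu]; [contradiction Hc; reflexivity |].
    exists y; split; [| split; [eapply reach_trans; [| apply reach_edge] |]]; eauto.
Qed.

Lemma dependent_choice_walk {V : Type} (E : V -> V -> Prop) (P : V -> Prop) (u : V) :
  P u -> (forall c, P c -> exists y, E c y /\ P y) ->
  exists w : nat -> V, w 0 = u /\ forall k, E (w k) (w (S k)) /\ P (w k).
Proof.
  intros Hu Hstep.
  pose (next := fun c : {c | P c} =>
    let y := constructive_indefinite_description _ (Hstep _ (proj2_sig c)) in
    exist P (proj1_sig y) (proj2 (proj2_sig y))).
  assert (Hnext : forall c, E (proj1_sig c) (proj1_sig (next c))).
  { intros c; unfold next; simpl.
    destruct (constructive_indefinite_description _ _) as [y [Hy Py]]; exact Hy. }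
  exists (fun k => proj1_sig (Nat.iter k next (exist P u Hu))).
  split; [reflexivity |]; intros k; split; [apply Hnext | apply proj2_sig].
Qed.

Lemma nontrivial_scc_walk {V : Type} (E : V -> V -> Prop) (u : V) :
  nontrivial_scc E u ->
  exists w : nat -> V, w 0 = u /\ (forall k, E (w k) (w (S k))) /\ (forall k, reach E (w k) u).
Proof.
  intros Hu.
  destruct (dependent_choice_walk E (scc E u) u (conj (reach_refl E u) (reach_refl E u))
              (fun c => scc_successor E u c Hu)) as [w [Hw0 Hw]].
  exists w; split; [| split]; intros; auto; apply Hw.
Qed.

Definition splice {V : Type} (v w : nat -> V) (L k : nat) : V :=
  if k <=? L then v k else w (k - S L).

Lemma splice_low {V : Type} (v w : nat -> V) (L k : nat) : k <= L -> splice v w L k = v k.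
Proof. unfold splice; intros; destruct (Nat.leb_spec k L); [reflexivity | lia]. Qed.

Lemma splice_high {V : Type} (v w : nat -> V) (L k : nat) :
  L < k -> splice v w L k = w (k - S L).
Proof. unfold splice; intros; destruct (Nat.leb_spec k L); [lia | reflexivity]. Qed.

Lemma splice_walk {V : Type} (E : V -> V -> Prop) (v w : nat -> V) (L : nat) :
  (forall i, i < L -> E (v i) (v (S i))) -> E (v L) (w 0) ->
  (forall k, E (w k) (w (S k))) -> forall k, E (splice v w L k) (splice v w L (S k)).
Proof.
  intros Hv HL Hw k.
  destruct (lt_eq_lt_dec k L) as [[Hk | ->] | Hk].
  - rewrite !splice_low by lia; auto.
  - rewrite splice_low, splice_high, Nat.sub_diag by lia; exact HL.
  - rewrite !splice_high by lia.
    replace (S k - S L) with (S (k - S L)) by lia; apply Hw.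
Qed.

Section Separation.

Variables (t t' : term) (L x : nat).
Hypothesis sorted_t : leaves_sorted t.
Hypothesis leaves_t' : leaves t' = leaves t.
Hypothesis depth_agree : forall p, In p (leaves t) -> depth t p <= L -> depth t' p = depth t p.
Hypothesis x_leaf : In x (leaves t).
Hypothesis depth_x : depth t x = S L.
Hypothesis depth'_x : S L < depth t' x.

Lemma subtree_entry_edge : exists p c,
  In (p, c) (tedges t') /\ ~ descendant t x p /\ descendant t x c /\ S L <= depth t p.
Proof.
  assert (sorted_t' : leaves_sorted t') by (unfold leaves_sorted; rewrite leaves_t'; exact sorted_t).
  assert (Hroot : twalk t' (leftmost t') x (S L + (depth t' x - S L))).
  { replace (S L + _) with (depth t' x) by lia; apply twalk_root_depth; congruence. }
  destruct (twalk_add_inv _ _ _ _ _ Hroot) as [y [Wy Wyx]].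
  assert (Hy : ~ descendant t x y).
  { intros [k Hk]; pose proof (twalk_le _ _ _ _ sorted_t Hk).
    pose proof (twalk_lt t' y x (depth t' x - S L) sorted_t' ltac:(lia) Wyx); lia. }
  assert (Hx : descendant t x x) by (exists 0; constructor).
  destruct (twalk_cross (descendant t x) _ _ _ _ Wyx Hy Hx) as [p [c [k [Wp [Hpc [Hp Hc]]]]]].
  exists p, c; repeat split; auto.
  assert (Hdp : depth t' p = S L + k).
  { rewrite (twalk_depth _ _ _ _ sorted_t' Wp), (twalk_depth _ _ _ _ sorted_t' Wy),
      depth_leftmost; lia. }
  destruct (Nat.le_gt_cases (depth t p) L) as [Hle | Hgt]; [| lia].
  assert (Hp' : In p (leaves t)) by (rewrite <- leaves_t'; exact (proj1 (tedges_in_leaves _ _ _ Hpc))).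
  pose proof (depth_agree p Hp' Hle); lia.
Qed.

Variables (V : Type) (E : V -> V -> Prop).

Definition split_assignment (ga gb : nat -> V) (u : nat) : V :=
  if excluded_middle_informative (descendant t x u) then ga (depth t u) else gb (depth t u).

Section Walks.

Variables ga gb : nat -> V.
Hypothesis walk_ga : forall k, E (ga k) (ga (S k)).
Hypothesis walk_gb : forall k, E (gb k) (gb (S k)).
Hypothesis ga_gb_agree : forall k, k <= L -> ga k = gb k.

Lemma split_assignment_hom (i j : nat) : In (i, j) (tedges t) ->
  E (split_assignment ga gb i) (split_assignment ga gb j).
Proof.
  intros Hij; pose proof (depth_tedge _ _ _ sorted_t Hij) as Hd.
  unfold split_assignment.
  destruct (excluded_middle_informative (descendant t x i)) as [Hi | Hi];
    destruct (excluded_middle_informative (descendant t x j)) as [Hj | Hj]; rewrite Hd.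
  - apply walk_ga.
  - destruct Hi as [k Hk]; contradiction Hj; exists (S k); eapply twalk_snoc; eauto.
  - rewrite (tedge_into_descendants _ _ _ _ sorted_t Hij Hi Hj), depth_x in Hd.
    injection Hd as <-; rewrite <- ga_gb_agree by lia; apply walk_ga.
  - apply walk_gb.
Qed.

Lemma satisfies_joins_walks :
  satisfies E t t' -> exists i j, L < i /\ L < j /\ E (gb i) (ga j).
Proof.
  intros Hsat; set (f := split_assignment ga gb).
  assert (Hf : eval E (fun u => Some (f u)) t' <> None).
  { rewrite <- (Hsat (fun u => Some (f u))), (eval_hom E f t split_assignment_hom).
    discriminate. }
  destruct subtree_entry_edge as [p [c [Hpc [Hp [Hc Hdp]]]]].
  pose proof (eval_tedge E f t' p c Hf Hpc) as Hfpc; unfold f, split_assignment in Hfpc.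
  destruct (excluded_middle_informative (descendant t x p)); [contradiction |].
  destruct (excluded_middle_informative (descendant t x c)); [| contradiction].
  exists (depth t p), (depth t c); repeat split; auto.
  destruct Hc as [k Hk]; rewrite (twalk_depth _ _ _ _ sorted_t Hk); lia.
Qed.

End Walks.

Lemma satisfies_successor_reach (v : nat -> V) (a b : V) :
  satisfies E t t' -> (forall i, i < L -> E (v i) (v (S i))) ->
  E (v L) a -> E (v L) b -> nontrivial_scc E a -> nontrivial_scc E b -> reach E b a.
Proof.
  intros Hsat Hv Ha Hb Na Nb.
  destruct (nontrivial_scc_walk E a Na) as [wa [Hwa0 [Hwa Rwa]]].
  destruct (nontrivial_scc_walk E b Nb) as [wb [Hwb0 [Hwb _]]].
  destruct (satisfies_joins_walks (splice v wa L) (splice v wb L)) as [i [j [Hi [Hj Hij]]]].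
  - apply splice_walk; [| rewrite Hwa0 |]; auto.
  - apply splice_walk; [| rewrite Hwb0 |]; auto.
  - intros k Hk; rewrite !splice_low by lia; reflexivity.
  - exact Hsat.
  - rewrite !splice_high in Hij by lia.
    rewrite <- Hwb0; eapply reach_trans; [apply walk_reach, Hwb |].
    eapply reach_trans; [apply reach_edge, Hij | apply Rwa].
Qed.

End Separation.

Lemma L_cond_iff (t t' : term) (m : nat) :
  leaves_sorted t -> leaves t' = leaves t ->
  L_cond t t' m <->
  (forall p, In p (leaves t) -> depth t p <= m \/ depth t' p <= m -> depth t p = depth t' p).
Proof.
  intros Hs Hl.
  assert (Hs' : leaves_sorted t') by (unfold leaves_sorted; rewrite Hl; exact Hs).
  split.
  - intros Hm p Hp Hle; apply (Hm p); auto;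
      [apply (is_depth_iff _ _ _ Hs) | apply (is_depth_iff _ _ _ Hs')]; rewrite ?Hl; auto.
  - intros Hm p d d' Hd Hd'.
    apply (is_depth_iff _ _ _ Hs) in Hd as [Hp ->].
    apply (is_depth_iff _ _ _ Hs') in Hd' as [_ ->]; auto.
Qed.

Lemma is_L_disagreement (t t' : term) (L : nat) :
  leaves_sorted t -> leaves t' = leaves t -> is_L t t' L ->
  exists x, In x (leaves t) /\
    (depth t x = S L /\ S L < depth t' x \/ depth t' x = S L /\ S L < depth t x).
Proof.
  intros Hs Hl [HL HLmax]; rewrite L_cond_iff in HL by auto.
  apply NNPP; intros Hno.
  enough (S L <= L) by lia.
  apply HLmax; apply L_cond_iff; auto; intros p Hp Hle.
  destruct (Nat.eq_dec (depth t p) (depth t' p)) as [| Hne]; auto.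
  assert (~ (depth t p <= L \/ depth t' p <= L)) by (intros H; apply Hne, HL; auto).
  contradiction Hno; exists p; split; [auto | lia].
Qed.

Lemma successor_sccs_equal (t t' : term) (L : nat) {V : Type} (E : V -> V -> Prop)
    (v : nat -> V) (a b : V) :
  leaves_sorted t -> leaves t' = leaves t -> is_L t t' L -> satisfies E t t' ->
  (forall i, i < L -> E (v i) (v (S i))) -> E (v L) a -> E (v L) b ->
  nontrivial_scc E a -> nontrivial_scc E b -> scc E a = scc E b.
Proof.
  intros Hs Hl HL Hsat Hv Ha Hb Na Nb.
  assert (Hs' : leaves_sorted t') by (unfold leaves_sorted; rewrite Hl; exact Hs).
  assert (Hagree := proj1 (L_cond_iff t t' L Hs Hl) (proj1 HL)).
  destruct (is_L_disagreement t t' L Hs Hl HL) as [x [Hx [[Hdx Hdx'] | [Hdx' Hdx]]]].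
  - apply scc_eq; eapply (satisfies_successor_reach t t' L x); eauto;
      intros p Hp HpL; symmetry; apply Hagree; auto.
  - rewrite <- Hl in Hx, Hagree.
    assert (Hsat' : satisfies E t' t) by (intros s; symmetry; apply Hsat).
    apply scc_eq; eapply (satisfies_successor_reach t' t L x); eauto;
      intros p Hp HpL; apply Hagree; auto.
Qed.

Theorem lemma6p19 (n : nat) (t t' : term) (V : Type) (E : V -> V -> Prop) (L : nat) :
  in_Bn n t -> in_Bn n t' -> t <> t' ->
  satisfies E t t' ->
  is_L t t' L ->
  (forall (v : nat -> V) (v' : V),
      (forall i, i <= L -> E (v i) (v (S i))) ->
      E (v L) v' ->
      nontrivial_scc E (v (S L)) ->
      nontrivial_scc E v' ->
      scc E (v (S L)) = scc E v')
  /\ BG_lt E L.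
Proof.
  intros Hn Hn' _ Hsat HL.
  assert (Hs : leaves_sorted t) by (unfold leaves_sorted; rewrite Hn; apply StronglySorted_seq).
  assert (Hl : leaves t' = leaves t) by congruence.
  split.
  - intros v v' Hv Hv' Na Nb.
    apply (successor_sccs_equal t t' L E v); auto.
    intros i Hi; apply Hv; lia.
  - intros m [w [a [b [Hw [Ha [Hb [Na [Nb Hab]]]]]]]].
    destruct (Nat.lt_ge_cases m L) as [| Hm]; [assumption | contradiction Hab].
    apply (successor_sccs_equal t t' L E (fun i => w (i + (m - L)))); auto;
      try (replace (L + (m - L)) with m by lia; assumption).
    intros i Hi; replace (S i + (m - L)) with (S (i + (m - L))) by lia; apply Hw; lia.
Qed.
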